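(* Let $Q\in\mathcal{P}$ have balance coefficient $\beta$ (so $\beta\ge \tfrac12$). Then for every $0<v<1$, $$L(v)\;\le\; D^*(v,Q)\;\le\; \mathrm{KL}_2\!\left(\beta-\tfrac{v}{2},\,\beta\right).$$
   Context: Let $(\Omega,\mathcal{F},\mu)$ be a finite or $\sigma$-finite measure space, and let $\mathcal{P}$ be the set of probability measures on $(\Omega,\mathcal{F})$ absolutely continuous with respect to $\mu$. For $P,Q\in\mathcal{P}$ the lower-case letters $p,q$ denote their densities with respect to $\mu$. The Kullback–Leibler divergence is $D(P\Vert Q)=\int \ln\frac{dP}{dQ}\,dP$ if $P\ll Q$, and $D(P\Vert Q)=+\infty$ otherwise. The total variation distance is $V(P,Q)=\int_\Omega |p-q|\,d\mu$. For $v>0$ and $Q\in\mathcal{P}$ define $D^*(v,Q)=\inf\{D(P\Vert Q): P\in\mathcal{P},\ V(P,Q)\ge v\}$, with $\inf\emptyset=+\infty$. For $p,q\in[0,1]$ let $\mathrm{KL}_2(p,q)=p\ln\frac{p}{q}+(1-p)\ln\frac{1-p}{1-q}$, with the conventions $0\ln(0/x)=0$ and $a\ln(a/0)=+\infty$ for $a>0$. In particular $\mathrm{KL}_2(1-\tfrac v2,1)=+\infty$. Vajda's function is $L(v)=\inf\{D(P\Vert Q): V(P,Q)=v\}$, where the infimum is over all pairs of probability measures $P,Q$ on a common measurable space. The range of $Q$ is $\mathcal{R}(Q)=\{Q(A):A\in\mathcal{F}\}$. The balance coefficient of $Q$ is $\beta=\inf\{x\in\mathcal{R}(Q): x\ge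 \tfrac12\}$. *)

From HB Require Import structures.
From mathcomp Require Import all_boot all_order all_algebra.
From mathcomp Require Import all_classical all_reals all_analysis.
Set Implicit Arguments. Unset Strict Implicit. Unset Printing Implicit Defensive.
Import Order.TTheory GRing.Theory Num.Theory.
Import numFieldNormedType.Exports.
Local Open Scope classical_set_scope.
Local Open Scope ring_scope.
Local Open Scope charge_scope.

Section defs.
Context {R : realType} {d : measure_display} {T : measurableType d}.

Definition Pcal (mu : {sigma_finite_measure set T -> \bar R}) :
  set (probability T R) := [set P | P `<< mu].

Definition dens (mu : {sigma_finite_measure set T -> \bar R})
  (P : probability T R) : T -> \bar R :=
  ('d (charge_of_finite_measure P) '/d mu).

Definition TV (mu : {sigma_finite_measure set T -> \bar R})
  (P Q : probability T R) : \bar R :=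
  (\int[mu]_x `| dens mu P x - dens mu Q x |)%E.

Definition KL (P Q : probability T R) : \bar R :=
  if pselect (P `<< Q) then
    (\int[P]_x (ln (fine (('d (charge_of_finite_measure P) '/d Q) x)))%:E)%E
  else +oo%E.

Definition Dstar (mu : {sigma_finite_measure set T -> \bar R}) (v : R)
  (Q : probability T R) : \bar R :=
  ereal_inf [set KL P Q | P in [set P | Pcal mu P /\ (v%:E <= TV mu P Q)%E]].

Definition rangeQ (Q : probability T R) : set R :=
  [set x | exists2 A, measurable A & Q A = x%:E].

Definition balance (Q : probability T R) : R :=
  inf [set x | rangeQ Q x /\ 1/2 <= x].

End defs.

Definition xlnxy {R : realType} (a b : R) : \bar R :=
  if a == 0 then 0%E else if b == 0 then +oo%E else (a * ln (a / b))%:E.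

Definition KL2 {R : realType} (p q : R) : \bar R :=
  (xlnxy p q + xlnxy (1 - p) (1 - q))%E.

(* Vajda's function: inf of D(P||Q) over all pairs P,Q of probability measures
   on a common measurable space with V(P,Q) = v; V is computed w.r.t. any
   sigma-finite measure dominating both P and Q (e.g. P+Q). *)
Definition Vajda {R : realType} (v : R) : \bar R :=
  ereal_inf [set x | exists (d : measure_display) (T : measurableType d)
     (mu : {sigma_finite_measure set T -> \bar R}) (P Q : probability T R),
     [/\ P `<< mu, Q `<< mu, TV mu P Q = v%:E & x = KL P Q]].

(* Lower bound: if [r = dP/dQ] and [V(P,Q) = t >= v], the mixture with density
   [l r + 1 - l], [l = v/t], has variation exactly [v] and, by convexity of
   [x ln x], divergence at most [l D(P||Q) <= D(P||Q)].
   Upper bound: an event [A] with [Q(A) = y] in [[1/2, 1)] carries the density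
   [(y - v/2)/y] on [A] and [(1 - y + v/2)/(1 - y)] off [A], which moves mass
   [v/2] out of [A]: its variation is [v] and its divergence [KL2(y - v/2, y)].
   Letting [y] decrease to [beta] and using continuity of [y |-> KL2(y - v/2, y)]
   gives the bound; for [beta = 1] the right-hand side is [+oo]. *)

From HB Require Import structures.
From mathcomp Require Import all_boot all_order all_algebra.
From mathcomp Require Import all_classical all_reals all_analysis.
From mathcomp Require Import measurable_realfun.
From mathcomp Require Import ring lra.

Set Implicit Arguments.
Unset Strict Implicit.
Unset Printing Implicit Defensive.
Import Order.TTheory GRing.Theory Num.Theory.
Import numFieldNormedType.Exports.
Local Open Scope classical_set_scope.
Local Open Scope ring_scope.
Local Open Scope charge_scope.

Section xlnx_inequalities.
Variable R : realType.
Implicit Types r l x : R.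

Lemma ln_le_subr1 x : 0 < x -> ln x <= x - 1.
Proof.
move=> x0; have := @le_ln1Dx R (x - 1).
by rewrite addrCA subrr addr0; apply; lra.
Qed.

Lemma subr1_le_xlnx r : 0 <= r -> r - 1 <= r * ln r.
Proof.
rewrite le_eqVlt => /orP[/eqP<-|r0]; first by rewrite ln0 ?mulr0//; lra.
have := @ln_le_subr1 r^-1; rewrite invr_gt0 lnV ?posrE// => /(_ r0) h.
have : r * (- ln r) <= r * (r^-1 - 1) by rewrite ler_wpM2l// ltW.
by rewrite mulrBr mulfV ?gt_eqF// mulr1; lra.
Qed.

Lemma xlnx_mix_le r l : 0 <= r -> 0 < l <= 1 ->
  (l * r + (1 - l)) * ln (l * r + (1 - l)) <= l * (r * ln r).
Proof.
move=> r0 /andP[l0 l1]; set s := l * r + (1 - l).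
have [r_eq0|r_gt0] := eqVneq r 0.
  rewrite /s r_eq0 !mulr0 add0r mul0r mulr0.
  have : ln (1 - l) <= 0 by apply: ln_le0; lra.
  have : 0 <= 1 - l by lra.
  nra.
have {r0 r_gt0}r0 : 0 < r by rewrite lt0r r_gt0.
have s0 : 0 < s by rewrite /s; nra.
(* [x ln x] lies above its tangent line at [s]; average this at [r] and at [1]. *)
have tangent_r : r * ln s + (r - s) <= r * ln r.
  have := ln_le_subr1 (divr_gt0 s0 r0); rewrite ln_div ?posrE// => ln_sr.
  have : r * (ln s - ln r) <= r * (s / r - 1) by rewrite ler_wpM2l// ltW.
  by rewrite !mulrBr mulrCA mulfV ?gt_eqF// !mulr1; lra.
have tangent_1 : ln s + (1 - s) <= 0 by have := ln_le_subr1 s0; lra.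
have := ler_wpM2l (ltW l0) tangent_r.
have := ler_wpM2l (_ : 0 <= 1 - l) tangent_1; rewrite subr_ge0 l1 mulr0 => /(_ isT).
by rewrite /s; nra.
Qed.

End xlnx_inequalities.

Section integral_lemmas.
Context d (T : measurableType d) (R : realType).
Local Open Scope ereal_scope.
Variable mu : {measure set T -> \bar R}.
Implicit Type h : T -> \bar R.

Lemma le_integral_measurable (D : set T) (f g : T -> \bar R) :
  measurable D -> measurable_fun D f -> measurable_fun D g ->
  {in D, forall x, f x <= g x} -> \int[mu]_(x in D) f x <= \int[mu]_(x in D) g x.
Proof.
move=> mD mf mg fg; rewrite integralE [leRHS]integralE leeB//.
- apply: ge0_le_integral => //.
  + exact: measurable_funepos.
  + exact: measurable_funepos.
  + by move=> x /mem_set; exact: funepos_le.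
- apply: ge0_le_integral => //.
  + exact: measurable_funeneg.
  + exact: measurable_funeneg.
  + by move=> x /mem_set; exact: funeneg_le.
Qed.

Lemma integralZl_funeneg_lty (f : T -> R) (k : R) :
  (0 <= k)%R -> measurable_fun setT f ->
  \int[mu]_x (EFin \o f)^\- x < +oo ->
  \int[mu]_x (k * f x)%:E = k%:E * \int[mu]_x (f x)%:E.
Proof.
move=> k0 mf fin; have mF : measurable_fun setT (EFin \o f) by exact/measurable_EFinP.
under eq_integral do rewrite EFinM.
rewrite integralE (ge0_funeposM _ k0) (ge0_funenegM _ k0).
rewrite (ge0_integralZl_EFin _ measurableT (fun x _ => funepos_ge0 _ x) (measurable_funepos mF) k0).
rewrite (ge0_integralZl_EFin _ measurableT (fun x _ => funeneg_ge0 _ x) (measurable_funeneg mF) k0).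
rewrite (integralE _ _ (EFin \o f)) [RHS]muleBr// fin_num_adde_defl// fin_numN.
by rewrite ge0_fin_numE// integral_ge0// => x _; exact: funeneg_ge0.
Qed.

Lemma funeposM_ge0 h (u : T -> R) : (forall x, 0 <= u x)%R ->
  (fun x => h x * (u x)%:E)^\+ = (fun x => h^\+ x * (u x)%:E).
Proof.
move=> u0; apply/funext => x; rewrite !funeposE.
have [hx0|hx0] := leP 0 (h x).
  by rewrite !max_l// mule_ge0// lee_fin.
by rewrite !max_r ?mul0e// ?mule_le0_ge0 ?lee_fin// ltW.
Qed.

Lemma funenegM_ge0 h (u : T -> R) : (forall x, 0 <= u x)%R ->
  (fun x => h x * (u x)%:E)^\- = (fun x => h^\- x * (u x)%:E).
Proof.
move=> u0; apply/funext => x; rewrite !funenegE.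
have [hx0|hx0] := leP 0 (h x).
  by rewrite !max_r ?mul0e// oppe_le0// mule_ge0// lee_fin.
by rewrite !max_l ?mulNe// oppe_ge0 ?mule_le0_ge0 ?lee_fin// ltW.
Qed.

End integral_lemmas.

Section density_probability.
Context d (T : measurableType d) (R : realType).
Local Open Scope ereal_scope.
Variables (Q : probability T R) (g : T -> R).
Hypotheses (g0 : forall x, (0 <= g x)%R) (mg : measurable_fun setT g)
  (g1 : \int[Q]_x (g x)%:E = 1).

Definition density_measure (A : set T) : \bar R := \int[Q]_(x in A) (g x)%:E.

Let density_measure0 : density_measure set0 = 0.
Proof. by rewrite /density_measure integral_set0. Qed.

Let density_measure_ge0 A : 0 <= density_measure A.
Proof. by apply: integral_ge0 => x _; rewrite lee_fin. Qed.

Let density_measure_sigma_additive : semi_sigma_additive density_measure.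
Proof.
apply: semi_sigma_additive_nng_induced; first exact/measurable_EFinP.
by move=> x; rewrite lee_fin.
Qed.

HB.instance Definition _ := isMeasure.Build _ _ _ density_measure
  density_measure0 density_measure_ge0 density_measure_sigma_additive.

Let density_measureT : density_measure setT = 1.
Proof. exact: g1. Qed.

HB.instance Definition _ :=
  Measure_isProbability.Build _ _ _ density_measure density_measureT.

Definition density_prob : probability T R := density_measure.

End density_probability.

Section probability_with_density.
Context d (T : measurableType d) (R : realType).
Local Open Scope ereal_scope.
Variables (P Q : probability T R) (g : T -> R).
Hypotheses (g0 : forall x, (0 <= g x)%R) (mg : measurable_fun setT g)
  (PA : forall A, measurable A -> P A = \int[Q]_(x in A) (g x)%:E).

Lemma dominates_density : P `<< Q.
Proof.
apply/null_content_dominatesP => A mA QA0; rewrite PA//.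
by apply: null_set_integral => //; apply/measurable_EFinP; exact: measurable_funTS.
Qed.

Let ae_eq_RN_SigmaFinite :
  ae_eq Q setT (Radon_Nikodym_SigmaFinite.f P Q) (EFin \o g).
Proof.
apply: integral_ae_eq => //.
- exact: Radon_Nikodym_SigmaFinite.f_integrable dominates_density.
- exact/measurable_EFinP.
- move=> E _ mE; rewrite -Radon_Nikodym_SigmaFinite.f_integral//.
  + exact: PA.
  + exact: dominates_density.
Qed.

Lemma ae_eq_Radon_Nikodym_density :
  ae_eq Q setT ('d (charge_of_finite_measure P) '/d Q) (EFin \o g).
Proof.
apply: ae_eq_trans ae_eq_RN_SigmaFinite; apply: ae_eq_sym.
exact: (ae_eq_Radon_Nikodym_SigmaFinite dominates_density measurableT).
Qed.

Let ge0_integral_density (h : T -> \bar R) :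
  measurable_fun setT h -> (forall x, 0 <= h x) ->
  \int[P]_x h x = \int[Q]_x (h x * (g x)%:E).
Proof.
move=> mh h0; have PQ := dominates_density.
rewrite -(Radon_Nikodym_SigmaFinite.change_of_variables PQ)//.
apply: ae_eq_integral => //.
- apply: emeasurable_funM => //.
  exact: measurable_int (Radon_Nikodym_SigmaFinite.f_integrable PQ).
- by apply: emeasurable_funM => //; exact/measurable_EFinP.
- exact: ae_eqe_mul2l ae_eq_RN_SigmaFinite.
Qed.

(* Unlike the library's change of variables, no integrability is required:
   both integrals are split into positive and negative parts. *)
Lemma integral_density (h : T -> \bar R) : measurable_fun setT h ->
  \int[P]_x h x = \int[Q]_x (h x * (g x)%:E).
Proof.
move=> mh; rewrite integralE [RHS]integralE funeposM_ge0// funenegM_ge0//.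
rewrite (ge0_integral_density (measurable_funepos mh) (funepos_ge0 h)).
by rewrite (ge0_integral_density (measurable_funeneg mh) (funeneg_ge0 h)).
Qed.

Lemma KL_density : KL P Q = \int[Q]_x (g x * ln (g x))%:E.
Proof.
rewrite /KL; case: pselect => [PQ|]; last by case; exact: dominates_density.
have ae_ln : ae_eq P setT
    (fun x => (ln (fine ('d (charge_of_finite_measure P) '/d Q x)))%:E)
    (fun x => (ln (g x))%:E).
  have [N [mN QN sub]] := ae_eq_Radon_Nikodym_density.
  exists N; split => //; first exact: (null_content_dominatesP _ _).1 PQ N mN QN.
  by move=> x /= Nx; apply: sub => /= eqx; apply: Nx => _; rewrite /= eqx.
rewrite (ae_eq_integral _ _ measurableT _ _ ae_ln)//; first last.
- exact/measurable_EFinP/measurableT_comp.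
- by apply/measurable_EFinP/measurableT_comp => //; exact: measurableT_comp.
rewrite integral_density; last exact/measurable_EFinP/measurableT_comp.
by apply: eq_integral => x _; rewrite -EFinM mulrC.
Qed.

Variable mu : {sigma_finite_measure set T -> \bar R}.
Hypothesis Qmu : Q `<< mu.

Local Notation fQ := (Radon_Nikodym_SigmaFinite.f Q mu).

Let Pmu : P `<< mu. Proof. exact: null_dominates_trans dominates_density Qmu. Qed.

Let dens_P : ae_eq mu setT (dens mu P) (fun x => (g x)%:E * fQ x).
Proof.
apply: integral_ae_eq => //.
- exact: Radon_Nikodym_integrable.
- apply: emeasurable_funM; first exact/measurable_EFinP.
  exact: measurable_int (Radon_Nikodym_SigmaFinite.f_integrable Qmu).
- move=> E _ mE; rewrite -Radon_Nikodym_integral//.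
  rewrite (Radon_Nikodym_SigmaFinite.change_of_variables Qmu)//.
  + by move: (PA mE); rewrite /charge_of_finite_measure.
  + by apply/measurable_EFinP; exact: measurable_funTS.
Qed.

Let dens_Q : ae_eq mu setT (dens mu Q) fQ.
Proof. exact/ae_eq_sym/ae_eq_Radon_Nikodym_SigmaFinite. Qed.

Lemma TV_density : TV mu P Q = \int[Q]_x (`|g x - 1|)%:E.
Proof.
have mfQ : measurable_fun setT fQ.
  exact: measurable_int (Radon_Nikodym_SigmaFinite.f_integrable Qmu).
have mg1 : measurable_fun setT (fun x => (`|g x - 1|)%:E).
  by apply/measurable_EFinP/measurableT_comp => //; exact: measurable_funB.
rewrite /TV (@ae_eq_integral _ _ _ mu setT (fun x => (`|g x - 1|)%:E * fQ x))//.
- by rewrite (Radon_Nikodym_SigmaFinite.change_of_variables Qmu).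
- apply: measurableT_comp => //; apply: emeasurable_funB.
  + exact: measurable_int
      (@Radon_Nikodym_integrable _ _ _ (charge_of_finite_measure P) mu Pmu).
  + exact: measurable_int
      (@Radon_Nikodym_integrable _ _ _ (charge_of_finite_measure Q) mu Qmu).
- exact: emeasurable_funM.
- apply: filterS2 dens_P dens_Q => x -> // -> // _.
  have := Radon_Nikodym_SigmaFinite.f_fin_num Qmu x.
  have := Radon_Nikodym_SigmaFinite.f_ge0 Qmu x.
  case: (fQ x) => [r| |] //=; rewrite lee_fin => r0 _.
  by rewrite -EFinM -{2}(mul1r r) -mulrBl normrM (ger0_norm r0).
Qed.

End probability_with_density.

Lemma dominated_density d (T : measurableType d) (R : realType)
    (P Q : probability T R) : P `<< Q ->
  exists g : T -> R, [/\ forall x, (0 <= g x)%R, measurable_fun setT g &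
    forall A, measurable A -> P A = (\int[Q]_(x in A) (g x)%:E)%E].
Proof.
move=> PQ; pose f := Radon_Nikodym_SigmaFinite.f P Q.
have mf : measurable_fun setT f.
  exact: measurable_int (Radon_Nikodym_SigmaFinite.f_integrable PQ).
exists (fine \o f); split.
- by move=> x; rewrite fine_ge0// Radon_Nikodym_SigmaFinite.f_ge0.
- by apply: measurableT_comp => //; exact: fine_measurable.
- move=> A mA; rewrite (Radon_Nikodym_SigmaFinite.f_integral PQ mA).
  by apply: eq_integral => x _; rewrite /= fineK// Radon_Nikodym_SigmaFinite.f_fin_num.
Qed.

Section density_mixture.
Context d (T : measurableType d) (R : realType).
Local Open Scope ereal_scope.
Variables (Q : probability T R) (r : T -> R).
Hypotheses (r0 : forall x, (0 <= r x)%R) (mr : measurable_fun setT r)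
  (r1 : \int[Q]_x (r x)%:E = 1).

Let integral_one : \int[Q]_x (cst 1%R x)%:E = 1.
Proof.
have := @integral_cst _ _ _ Q setT measurableT 1; rewrite mul1e => ->.
exact: probability_setT.
Qed.

Let integrable_r : Q.-integrable setT (EFin \o r).
Proof.
apply/integrableP; split; first exact/measurable_EFinP.
under eq_integral do rewrite /comp gee0_abs ?lee_fin//.
by rewrite r1 ltry.
Qed.

Let measurable_xlnx : measurable_fun setT (fun x => r x * ln (r x))%R.
Proof. by apply: measurable_funM => //; exact: measurableT_comp. Qed.

Lemma integral_abs_density_sub1_le2 : \int[Q]_x (`|r x - 1|)%:E <= 2%:E.
Proof.
apply: (@le_trans _ _ (\int[Q]_x ((r x)%:E + (cst 1%R x)%:E))).
  apply: ge0_le_integral => //.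
  - by apply/measurable_EFinP/measurableT_comp => //; exact: measurable_funB.
  - by apply: emeasurable_funD => //; exact/measurable_EFinP.
  - move=> x _; rewrite -EFinD lee_fin /=.
    by have := r0 x; rewrite ler_norml => ?; apply/andP; split; lra.
rewrite (ge0_integralD Q measurableT (fun x _ => (r0 x : 0 <= (r x)%:E))
  ((measurable_EFinP _ _).2 mr) (fun x _ => (ler01 : 0 <= (cst 1%R x)%:E)))//;
  last exact/measurable_EFinP/measurable_cst.
by rewrite r1 integral_one -EFinD.
Qed.

Lemma integral_xlnx_density_ge0 : 0 <= \int[Q]_x (r x * ln (r x))%:E.
Proof.
apply: (@le_trans _ _ (\int[Q]_x ((r x)%:E - (cst 1%R x)%:E))).
  rewrite (integralB_EFin _ integrable_r) ?r1 ?integral_one ?subee//.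
  exact: finite_measure_integrable_cst.
apply: le_integral_measurable => //.
- apply: emeasurable_funB; first exact/measurable_EFinP.
  exact/measurable_EFinP/measurable_cst.
- exact/measurable_EFinP/measurable_xlnx.
- by move=> x _; rewrite -EFinB lee_fin; exact: subr1_le_xlnx.
Qed.

Let integral_xlnx_funeneg_lty :
  \int[Q]_x (EFin \o (fun x => r x * ln (r x))%R)^\- x < +oo.
Proof.
apply: (@le_lt_trans _ _ (\int[Q]_x (cst 1%R x)%:E)); last by rewrite integral_one ltry.
apply: ge0_le_integral => //.
- exact/measurable_funeneg/measurable_EFinP/measurable_xlnx.
- exact/measurable_EFinP/measurable_cst.
- move=> x _; rewrite funenegE /= ge_max !lee_fin ler01 andbT.
  by have := subr1_le_xlnx (r0 x); have := r0 x; lra.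
Qed.

Variable l : R.
Hypothesis l01 : (0 < l <= 1)%R.

Definition mix_density x := (l * r x + (1 - l))%R.

Lemma mix_density_ge0 x : (0 <= mix_density x)%R.
Proof. by rewrite /mix_density; have := r0 x; case/andP: l01; nra. Qed.

Lemma measurable_mix_density : measurable_fun setT mix_density.
Proof. exact/measurable_funD/measurable_cst/measurable_funM. Qed.

Lemma integral_mix_density : \int[Q]_x (mix_density x)%:E = 1.
Proof.
have [l0 l1] := andP l01.
under eq_integral do rewrite EFinD EFinM.
rewrite ge0_integralD//; last 3 first.
- by move=> x _; rewrite mule_ge0 ?lee_fin// ltW.
- by apply: emeasurable_funM => //; exact/measurable_EFinP.
- by move=> x _; rewrite lee_fin subr_ge0.
rewrite ge0_integralZl_EFin//; last 3 first.
- by move=> x _; rewrite lee_fin.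
- exact/measurable_EFinP.
- exact: ltW.
rewrite r1 integral_cst// [X in _ + _ * X](_ : _ = 1); last exact: probability_setT.
rewrite !mule1 -EFinD.
by congr EFin; ring.
Qed.

Lemma integral_abs_mix_density_sub1 :
  \int[Q]_x (`|mix_density x - 1|)%:E = l%:E * \int[Q]_x (`|r x - 1|)%:E.
Proof.
have [l0 _] := andP l01.
have mr1 : measurable_fun setT (fun x => (`|r x - 1|)%:E).
  by apply/measurable_EFinP/measurableT_comp => //; exact: measurable_funB.
rewrite -(ge0_integralZl_EFin _ _ _ mr1 (ltW l0))//.
apply: eq_integral => x _; rewrite -EFinM.
have -> : (mix_density x - 1 = l * (r x - 1))%R by rewrite /mix_density; ring.
by rewrite normrM ger0_norm// ltW.
Qed.

Lemma integral_xlnx_mix_density_le :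
  \int[Q]_x (mix_density x * ln (mix_density x))%:E <=
  \int[Q]_x (r x * ln (r x))%:E.
Proof.
have [l0 l1] := andP l01.
apply: (@le_trans _ _ (\int[Q]_x (l * (r x * ln (r x)))%:E)).
  apply: le_integral_measurable => //.
  - apply/measurable_EFinP/measurable_funM; first exact: measurable_mix_density.
    exact/measurableT_comp/measurable_mix_density.
  - exact/measurable_EFinP/measurable_funM/measurable_xlnx.
  - by move=> x _; rewrite lee_fin; apply: xlnx_mix_le.
rewrite (integralZl_funeneg_lty (ltW l0) measurable_xlnx integral_xlnx_funeneg_lty).
have := integral_xlnx_density_ge0.
case: (\int[Q]_x _) => [y| |]//; last by rewrite mulry gtr0_sg// mul1e.
by rewrite !lee_fin => y0; nra.
Qed.

End density_mixture.

Lemma Vajda_le_KL d (T : measurableType d) (R : realType)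
    (mu : {sigma_finite_measure set T -> \bar R}) (P Q : probability T R) (v : R) :
  Q `<< mu -> (0 < v)%R -> (v%:E <= TV mu P Q)%E -> (Vajda v <= KL P Q)%E.
Proof.
move=> Qmu v0 vTV.
have [PQ|nPQ] := pselect (P `<< Q); last first.
  by rewrite /KL; case: pselect => [/nPQ//|?]; exact: leey.
have [r [r0 mr PA]] := dominated_density PQ.
have r1 : (\int[Q]_x (r x)%:E = 1)%E by rewrite -PA// probability_setT.
have TVr := TV_density r0 mr PA Qmu.
set t := fine (TV mu P Q).
have TVt : TV mu P Q = t%:E.
  rewrite /t fineK// TVr ge0_fin_numE ?integral_ge0//.
  exact: le_lt_trans (integral_abs_density_sub1_le2 r0 mr r1) (ltry _).
rewrite TVt lee_fin in vTV.
have t0 : 0 < t := lt_le_trans v0 vTV.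
have l01 : 0 < v / t <= 1 by rewrite divr_gt0//= ler_pdivrMr// mul1r.
have ml := measurable_mix_density mr (v / t).
pose Pl := density_prob (mix_density_ge0 r0 l01) ml (integral_mix_density r0 mr r1 l01).
have PlA A : measurable A -> Pl A = (\int[Q]_(x in A) (mix_density r (v / t) x)%:E)%E.
  by [].
apply: (@le_trans _ _ (KL Pl Q)).
  apply: ereal_inf_lbound; exists d, T, mu, Pl, Q; split => //.
  - exact: null_dominates_trans (dominates_density ml PlA) Qmu.
  - rewrite (TV_density (mix_density_ge0 r0 l01) ml PlA Qmu) integral_abs_mix_density_sub1// -TVr TVt.
    by rewrite -EFinM mulfVK// gt_eqF.
rewrite (KL_density (mix_density_ge0 r0 l01) ml PlA) (KL_density r0 mr PA).
exact: integral_xlnx_mix_density_le.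
Qed.

Section two_valued.
Context d (T : measurableType d) (R : realType).
Variables (Q : probability T R) (A : set T) (y : R).
Hypotheses (mA : measurable A) (QA : Q A = y%:E).

Definition two_valued (a b : R) (t : T) : R := a * \1_A t + b * \1_(~` A) t.

Lemma measurable_two_valued a b : measurable_fun setT (two_valued a b).
Proof.
by apply: measurable_funD; apply: measurable_funM => //;
  apply: measurable_indic => //; exact: measurableC.
Qed.

Lemma integral_two_valued a b :
  (\int[Q]_t (two_valued a b t)%:E = (a * y + b * (1 - y))%:E)%E.
Proof.
have mAC : measurable (~` A) by exact: measurableC.
rewrite -(setUv A) integral_setU//; last 2 first.
- by rewrite setUv; apply/measurable_EFinP; exact: measurable_two_valued.
- exact/disj_setPCl.
rewrite (eq_integral (cst a%:E)); last first.
  by move=> t tA; rewrite /two_valued !indicE in_setC tA /= mulr1 mulr0 addr0.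
rewrite [X in (_ + X)%E](eq_integral (cst b%:E)); last first.
  move=> t; rewrite inE /= => tA.
  by rewrite /two_valued !indicE in_setC memNset //= mulr1 mulr0 add0r.
rewrite !integral_cst// [X in (_ * X + _)%E](_ : _ = y%:E) //.
rewrite [X in (_ + _ * X)%E](_ : _ = 1 - y%:E)%E; last first.
  by rewrite -QA; exact: probability_setC.
by rewrite -EFinB -!EFinM -EFinD.
Qed.

Lemma integral_comp_two_valued (F : R -> R) a b :
  (\int[Q]_t (F (two_valued a b t))%:E = (F a * y + F b * (1 - y))%:E)%E.
Proof.
rewrite -integral_two_valued; apply: eq_integral => t _; congr EFin.
rewrite /two_valued !indicE in_setC.
by case: (t \in A) => /=; rewrite !mulr1 !mulr0 ?addr0 ?add0r.
Qed.

End two_valued.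

Definition kl2 (R : realType) (p q : R) : R :=
  p * ln (p / q) + (1 - p) * ln ((1 - p) / (1 - q)).

Lemma KL2E (R : realType) (p q : R) : 0 < p < 1 -> 0 < q < 1 ->
  KL2 p q = (kl2 p q)%:E.
Proof.
move=> /andP[p0 p1] /andP[q0 q1].
rewrite /KL2 /xlnxy !gt_eqF ?subr_gt0//.
Qed.

Lemma Dstar_le_kl2 d (T : measurableType d) (R : realType)
    (mu : {sigma_finite_measure set T -> \bar R}) (Q : probability T R)
    (A : set T) (y v : R) :
  Q `<< mu -> measurable A -> Q A = y%:E -> 0 < v -> v / 2 < y < 1 ->
  (Dstar mu v Q <= (kl2 (y - v / 2) y)%:E)%E.
Proof.
move=> Qmu mA QA v0 /andP[cy y1]; set c := v / 2 in cy *.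
have c0 : 0 < c by rewrite divr_gt0.
have y0 : 0 < y := lt_trans c0 cy.
pose a := (y - c) / y; pose b := (1 - (y - c)) / (1 - y).
have ay : a * y = y - c by rewrite /a mulfVK ?gt_eqF.
have b1y : b * (1 - y) = 1 - (y - c) by rewrite /b mulfVK// gt_eqF// subr_gt0.
have a0 : 0 < a by rewrite /a divr_gt0// subr_gt0.
have b0 : 0 < b by rewrite /b divr_gt0// subr_gt0; lra.
have g0 t : 0 <= two_valued A a b t.
  by rewrite /two_valued !indicE addr_ge0// mulr_ge0// ltW.
have mg := measurable_two_valued mA a b.
have g1 : (\int[Q]_t (two_valued A a b t)%:E = 1)%E.
  by rewrite (integral_two_valued mA QA) ay b1y; congr EFin; ring.
pose P := density_prob g0 mg g1.
have PA B : measurable B -> P B = (\int[Q]_(t in B) (two_valued A a b t)%:E)%E.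
  by [].
apply: (@le_trans _ _ (KL P Q)).
  apply: ereal_inf_lbound; exists P => //; split.
    exact: null_dominates_trans (dominates_density mg PA) Qmu.
  rewrite (TV_density g0 mg PA Qmu) (integral_comp_two_valued mA QA (fun z => `|z - 1|)).
  rewrite lee_fin distrC [`|b - 1|]ger0_norm ?ger0_norm.
  - by rewrite !mulrBl ay b1y /c; lra.
  - by rewrite subr_ge0 -(ler_pM2r y0) ay mul1r; lra.
  - by rewrite subr_ge0 -(ler_pM2r (_ : 0 < 1 - y)) ?b1y ?mul1r ?subr_gt0//; lra.
rewrite (KL_density g0 mg PA) (integral_comp_two_valued mA QA (fun z => z * ln z)).
suff -> : a * ln a * y + b * ln b * (1 - y) = kl2 (y - c) y by [].
by rewrite /kl2 -/a -/b -b1y -ay; ring.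
Qed.

Lemma continuous_kl2_shift (R : realType) (c y0 : R) : 0 < c -> c < y0 -> y0 < 1 ->
  {for y0, continuous (fun y => kl2 (y - c) y)}.
Proof.
move=> c0 cy0 y01.
have cvg_subl (k : R) : (fun y => k - y) @ y0 --> k - y0.
  by apply: cvgB; [exact: cvg_cst|exact: cvg_id].
have cvg_subr (k : R) : (fun y => y - k) @ y0 --> y0 - k.
  by apply: cvgB; [exact: cvg_id|exact: cvg_cst].
have cvg_ln (f : R -> R) : 0 < f y0 -> f @ y0 --> f y0 ->
    (fun y => ln (f y)) @ y0 --> ln (f y0).
  by move=> f0 cf; apply: continuous_comp cf _; exact: continuous_ln.
apply: cvgD; apply: cvgM.
- exact: cvg_subr.
- apply: (cvg_ln (fun y => (y - c) / y)); first by apply: divr_gt0; lra.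
  by apply: cvgM; [exact: cvg_subr|apply: cvgV; rewrite ?gt_eqF//; lra].
- by apply: cvgB; [exact: cvg_cst|exact: cvg_subr].
- apply: (cvg_ln (fun y => (1 - (y - c)) / (1 - y))); first by apply: divr_gt0; lra.
  apply: cvgM; first by apply: cvgB; [exact: cvg_cst|exact: cvg_subr].
  by apply: cvgV; [rewrite gt_eqF// subr_gt0|exact: cvg_subl].
Qed.

Lemma KL2_q1 (R : realType) (p : R) : p < 1 -> KL2 p 1 = +oo%E.
Proof.
move=> p1; have p1' : (1 - p == 0) = false by rewrite gt_eqF// subr_gt0.
by rewrite /KL2 /xlnxy subrr eqxx p1'; case: ifP; rewrite ?oner_eq0 ?addey.
Qed.

Section balance.
Context d (T : measurableType d) (R : realType) (Q : probability T R).
Local Notation S := [set x : R | rangeQ Q x /\ 1 / 2 <= x].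

Let balance_set_lbound : has_lbound S.
Proof. by exists (1 / 2) => x []. Qed.

Let balance_set1 : S 1.
Proof. by split; [exists setT => //; exact: probability_setT|lra]. Qed.

Lemma balance_ge_half : 1 / 2 <= balance Q.
Proof. by apply: lb_le_inf => [|x []//]; exists 1. Qed.

Lemma balance_le1 : balance Q <= 1.
Proof. exact: ge_inf balance_set_lbound _ balance_set1. Qed.

Lemma balance_approx e : 0 < e -> exists A y,
  [/\ measurable A, Q A = y%:E & balance Q <= y < balance Q + e].
Proof.
move=> e0; have [|y [[A mA QA] y12] ye] := @inf_adherent R S e e0.
  by split; [exists 1|exact: balance_set_lbound].
exists A, y; split => //; rewrite ye andbT.
exact: ge_inf balance_set_lbound _ (conj (ex_intro2 _ _ A mA QA) y12).
Qed.

End balance.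

Lemma Dstar_le_KL2_balance d (T : measurableType d) (R : realType)
    (mu : {sigma_finite_measure set T -> \bar R}) (Q : probability T R) (v : R) :
  Q `<< mu -> 0 < v -> v < 1 ->
  (Dstar mu v Q <= KL2 (balance Q - v / 2) (balance Q))%E.
Proof.
move=> Qmu v0 v1; have b12 := balance_ge_half Q; have b_le1 := balance_le1 Q.
set b := balance Q in b12 b_le1 *; set c := v / 2.
have [b1|b_ge1] := ltP b 1; last first.
  have -> : b = 1 by lra.
  by rewrite KL2_q1 ?leey// /c; lra.
have c0 : 0 < c by rewrite divr_gt0.
rewrite KL2E; [|rewrite /c; apply/andP; split; lra..].
apply/lee_addgt0Pr => e e0.
have /cvgrPdist_lt/(_ e e0)[r r0 near_b] :=
  @continuous_kl2_shift R c b c0 (ltac:(rewrite /c; lra)) b1.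
have r'0 : 0 < Num.min r ((1 - b) / 2) by rewrite lt_min r0 divr_gt0// subr_gt0.
have [A [y [mA QA /andP[b_le_y yb]]]] := balance_approx Q r'0.
move: yb; rewrite -ltrBlDl lt_min => /andP[yr yb].
apply: le_trans (Dstar_le_kl2 Qmu mA QA v0 _) _; first by rewrite /c; apply/andP; split; lra.
rewrite -EFinD lee_fin.
have : `|kl2 (b - c) b - kl2 (y - c) y| < e.
  by apply: near_b; rewrite /ball_ /= distrC ger0_norm ?subr_ge0; lra.
by rewrite ltr_norml => /andP[]; lra.
Qed.

Unset Implicit Arguments.
Set Strict Implicit.

Theorem theorem1 (R : realType) (d : measure_display) (T : measurableType d)
  (mu : {sigma_finite_measure set T -> \bar R}) (Q : probability T R) :
  Pcal mu Q ->
  forall v : R, 0 < v < 1 ->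
    (Vajda v <= Dstar mu v Q)%E /\
    (Dstar mu v Q <= KL2 (balance Q - v / 2) (balance Q))%E.
Proof.
move=> Qmu v /andP[v0 v1]; split; last exact: Dstar_le_KL2_balance.
by apply/ereal_infP => _ [P [_ vTV] <-]; exact: Vajda_le_KL Qmu v0 vTV.
Qed.
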